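(* Let $A=\langle a\mid a^k=1\rangle$ be a cyclic group of order $k$, let $r$ be an integer with $1\le r<k$ and $\gcd(r,k)=1$, let $\varphi$ be the automorphism of $A$ given by $a\mapsto a^r$, let $m$ be the multiplicative order of $r$ modulo $k$, and let $n$ be a positive multiple of $m$. Let $G=A\langle c\rangle$ be any finite group containing $A$ and an element $c$ of order $n$ with $A\cap\langle c\rangle=\{1\}$ and $G=A\langle c\rangle$, such that the skew-morphism of $A$ determined by $c$ (namely the map $\psi:A\to A$ defined by $cx=\psi(x)c^{j}$ with $\psi(x)\in A$, $j\in\mathbb{Z}_n$) equals $\varphi$. Then $G$ has a presentation \[ G=\langle a,c\mid a^k=c^n=1,\ c^ma=ac^{mt},\ ca=a^rc^{1+ms}\rangle, \] where $s,t\in\mathbb{Z}_{n/m}$ satisfy: (a) $t^{r-1}\equiv1\pmod{n/m}$; (b) $s\sum_{i=1}^{k}t^{i-1}\equiv0\pmod{n/m}$; (c) $s\sum_{i=1}^{m}\big(\sum_{j=1}^{r}t^{j-1}\big)^{i-1}\equiv t-1\pmod{n/m}$.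
   Context: A skew-morphism of a finite group $A$ is a permutation $\varphi$ of $A$ with $\varphi(1_A)=1_A$ for which there is a function $\pi:A\to\mathbb{Z}_m$ ($m$ the order of $\varphi$) with $\varphi(xy)=\varphi(x)\varphi^{\pi(x)}(y)$ for all $x,y\in A$. If $G=A\langle c\rangle$ with $A\cap\langle c\rangle=\{1\}$ and $|c|=n$, then for each $x\in A$ there are unique $\psi(x)\in A$ and $j\in\mathbb{Z}_n$ with $cx=\psi(x)c^j$, and $\psi$ is a skew-morphism of $A$ (the skew-morphism determined by $c$). *)

From mathcomp Require Import all_boot all_fingroup.
Set Implicit Arguments.
Unset Strict Implicit.
Unset Printing Implicit Defensive.

Definition is_mult_order (k r m : nat) : Prop :=
  0 < m /\ r ^ m = 1 %[mod k] /\ (forall i, 0 < i < m -> r ^ i <> 1 %[mod k]).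

From mathcomp Require Import all_boot all_fingroup all_solvable.
From mathcomp Require Import ring.
Set Implicit Arguments. Unset Strict Implicit. Unset Printing Implicit Defensive.

(* If [c^u a^i = a^(r^u i) c^e], computing [c^u a^(i+1)] in two ways and
   comparing normal forms in [<a><c>] gives [r^e = r^u (mod k)], hence
   [e = u (mod m)].  This yields [c a = a^r c^(1+ms)] and, as [a^(r^m) = a],
   [c^m a = a c^(mt)].  In any group whose elements [x], [y] satisfy these two
   relations, [y^j x^i] can be rewritten as [x^(r^j i) y^e] with an explicit
   [e]; specialising this ([x^k = 1], the two ways of computing [y^m y x], and
   [y^m x] itself) gives (a), (b), (c) as identities in the cyclic group
   [<y^m>] of order [n/m].  As the same formula holds in [G], the map
   [a^i c^j |-> x^i y^j] is a homomorphism from [G] onto any group generated by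
   such [x], [y]: the relations present [G]. *)

Definition geosum (t i : nat) : nat := \sum_(0 <= l < i) t ^ l.

Lemma geosum0 t : geosum t 0 = 0.
Proof. by rewrite /geosum big_geq. Qed.

Lemma geosum1 t : geosum t 1 = 1.
Proof. by rewrite /geosum big_nat1. Qed.

Lemma geosumD t i j : geosum t (i + j) = geosum t i + t ^ i * geosum t j.
Proof.
rewrite /geosum (big_cat_nat _ (leq_addr j i)) //= big_distrr /=.
rewrite -[in X in _ + X = _](add0n i) big_addn addKn; congr (_ + _).
by apply: eq_bigr => l _; rewrite expnD mulnC.
Qed.

Section GeosumMod.
Variables (d t r : nat).
Hypothesis t_expr : t ^ r = t %[mod d].

Lemma geosumM_mod i : geosum t (r * i) = geosum t r * geosum t i %[mod d].
Proof.
elim: i => [|i IH]; first by rewrite muln0 !geosum0 muln0.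
have t_exprM : t ^ (r * i) = t ^ i %[mod d] by rewrite expnM -modnXm t_expr modnXm.
rewrite mulnS addnC geosumD -addn1 geosumD geosum1 muln1 mulnDr.
by rewrite -modnDm IH -(modnMml (t ^ _)) t_exprM modnMml modnDm [t ^ i * _]mulnC.
Qed.

Lemma geosumX_mod u : geosum t (r ^ u) = geosum t r ^ u %[mod d].
Proof.
elim: u => [|u IH]; first by rewrite geosum1.
by rewrite expnS geosumM_mod -modnMmr IH modnMmr expnS.
Qed.

End GeosumMod.

Lemma expn_pred_mod1 d t k r : 0 < k -> 0 < r ->
  t ^ k = 1 %[mod d] -> t ^ r = t %[mod d] -> t ^ r.-1 = 1 %[mod d].
Proof.
case: k => // k _; case: r => // r _ /= t_expk t_expr.
rewrite -[t ^ r]mul1n -modnMml -t_expk modnMml -expnD addSnnS expnD.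
by rewrite -modnMmr t_expr modnMmr -expnSr t_expk.
Qed.

Lemma coprime_mulIl_mod u k x y : coprime u k -> u * x = u * y %[mod k] -> x = y %[mod k].
Proof.
move=> co_uk; wlog le_xy : x y / x <= y => [hwlog|].
  by case: (leqP x y) => [|/ltnW] le_yx; [apply: hwlog | move/esym/hwlog=> /(_ le_yx)].
move/esym/eqP; rewrite eqn_mod_dvd ?leq_mul2l ?le_xy ?orbT // -mulnBr.
by rewrite Gauss_dvdr 1?coprime_sym // -eqn_mod_dvd // eq_sym => /eqP.
Qed.

Lemma mult_order_dvdn k r m e : is_mult_order k r m -> r ^ e = 1 %[mod k] -> m %| e.
Proof.
case=> m_gt0 [r_expm min_m] r_expe; apply/negPn/negP => m_ndvd_e.
apply: (min_m (e %% m)); first by rewrite lt0n m_ndvd_e ltn_pmod.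
move: r_expe; rewrite {1}(divn_eq e m) expnD mulnC (mulnC _ m) expnM.
by rewrite -modnMmr -modnXm r_expm modnXm exp1n modnMmr muln1.
Qed.

Lemma mult_order_expn_inj k r m i j : is_mult_order k r m -> coprime r k ->
  r ^ i = r ^ j %[mod k] -> i = j %[mod m].
Proof.
move=> ord_r co_rk; wlog le_ij : i j / i <= j => [hwlog|].
  by case: (leqP i j) => [|/ltnW] le_ji; [apply: hwlog | move/esym/hwlog=> /(_ le_ji)/esym].
rewrite -(subnKC le_ij) expnD -{1}[r ^ i]muln1.
move/(coprime_mulIl_mod (coprimeXl i co_rk))/esym/(mult_order_dvdn ord_r) => m_dvd.
by apply/eqP; rewrite eq_sym eqn_mod_dvd ?leq_addr // addKn.
Qed.

Definition swap_exp (r m s t j i : nat) : nat :=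
  j + m * s * \sum_(0 <= u < j) geosum t (r ^ u * i).

Local Open Scope group_scope.

Section ExpgModDvd.
Variables (gT : finGroupType) (y : gT) (m : nat).
Hypothesis m_dvd : m %| #[y].

Lemma expgM_inj_mod i j : y ^+ (m * i) = y ^+ (m * j) -> i = j %[mod #[y] %/ m].
Proof. by rewrite !expgM => /eqP; rewrite eq_expg_mod_order orderXdiv // => /eqP. Qed.

Lemma expg_eq_mod_exists j u : j = u %[mod m] ->
  exists2 q, q < #[y] %/ m & y ^+ j = y ^+ (u + m * q).
Proof.
move=> j_mod; have y_gt0 := order_gt0 y; have m_gt0 := dvdn_gt0 y_gt0 m_dvd.
have le_u : u <= j + #[y] * u by rewrite (leq_trans (leq_pmull u y_gt0)) ?leq_addl.
have [q' def_j] : exists q', j + #[y] * u = u + m * q'.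
  exists ((j + #[y] * u - u) %/ m); rewrite [(m * _)%N]mulnC divnK ?subnKC //.
  by rewrite -eqn_mod_dvd // -(divnK m_dvd) mulnAC -modnDmr modnMl addn0 j_mod.
exists (q' %% (#[y] %/ m)); first by rewrite ltn_pmod // divn_gt0 // dvdn_leq.
have -> : y ^+ j = y ^+ (u + m * q') by rewrite -def_j expgD expgM expg_order expg1n mulg1.
by rewrite !expgD !expgM -orderXdiv // expg_mod_order.
Qed.

End ExpgModDvd.

Section Relations.
Variables (gT : finGroupType) (x y : gT) (r m s t : nat).
Hypotheses (yx : y * x = x ^+ r * y ^+ (1 + m * s))
           (ymx : y ^+ m * x = x * y ^+ (m * t)).

Lemma swap_ym_x q : y ^+ (m * q) * x = x * y ^+ (m * t * q).
Proof.
elim: q => [|q IH]; first by rewrite !muln0 mul1g mulg1.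
by rewrite mulnS expgD -mulgA IH mulgA ymx -mulgA -expgD mulnS.
Qed.

Lemma swap_ym_xX q i : y ^+ (m * q) * x ^+ i = x ^+ i * y ^+ (m * q * t ^ i).
Proof.
elim: i => [|i IH]; first by rewrite muln1 mulg1 mul1g.
rewrite expgSr mulgA IH -mulgA -mulnA swap_ym_x mulgA; congr (_ * _ ^+ _).
by rewrite expnS; ring.
Qed.

Lemma swap_y_xX i : y * x ^+ i = x ^+ (r * i) * y ^+ (1 + m * s * geosum t i).
Proof.
elim: i => [|i IH]; first by rewrite muln0 geosum0 muln0 mulg1 mul1g.
rewrite expgS mulgA yx -mulgA expgD -mulgA swap_ym_xX expg1 (mulgA y) IH.
rewrite -!mulgA -!expgD mulnS -[i.+1]addn1 geosumD geosum1 muln1 mulnDr addnA.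
by rewrite [x ^+ (_ + _)]expgD mulgA.
Qed.

Lemma swap_yX_xX j i : y ^+ j * x ^+ i = x ^+ (r ^ j * i) * y ^+ (swap_exp r m s t j i).
Proof.
elim: j i => [|j IH] i; first by rewrite mul1g mul1n /swap_exp big_geq // muln0 mulg1.
rewrite expgSr -mulgA swap_y_xX mulgA IH -mulgA -expgD expnSr mulnA.
congr (_ * _ ^+ _); rewrite /swap_exp big_nat_recl //= expn0 mul1n.
under [in RHS]eq_bigr do rewrite expnSr -mulnA.
ring.
Qed.

Variable k : nat.
Hypotheses (xk : x ^+ k = 1) (m_dvd : m %| #[y]).

Lemma t_expk_mod : t ^ k = 1 %[mod #[y] %/ m].
Proof.
apply: (expgM_inj_mod m_dvd).
by have := swap_ym_xX 1 k; rewrite xk mulg1 mul1g !muln1 => <-.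
Qed.

Lemma t_expr_mod : t ^ r = t %[mod #[y] %/ m].
Proof.
apply: (expgM_inj_mod m_dvd); apply: (mulgI (x ^+ r)); apply: (mulIg (y ^+ (1 + m * s))).
have := swap_ym_xX 1 r; rewrite !muln1 => <-.
have ycomm : y ^+ (m * t) * y ^+ (1 + m * s) = y ^+ (1 + m * s) * y ^+ (m * t).
  by rewrite -!expgD addnC.
rewrite -[RHS]mulgA ycomm [RHS]mulgA -yx -[RHS]mulgA -ymx.
by rewrite -[LHS]mulgA -yx !mulgA -expgS -expgSr.
Qed.

Lemma cond_a : 0 < k -> 0 < r -> t ^ r.-1 = 1 %[mod #[y] %/ m].
Proof. by move=> k_gt0 r_gt0; apply: expn_pred_mod1 t_expk_mod t_expr_mod. Qed.

Lemma cond_b : s * geosum t k = 0 %[mod #[y] %/ m].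
Proof.
apply: (expgM_inj_mod m_dvd); rewrite muln0 mulnA.
have := swap_y_xX k; rewrite xk mulnC expgM xk expg1n mulg1 mul1g expgD expg1.
by rewrite -{1}[y]mulg1 => /mulgI.
Qed.

Hypothesis r_expm : r ^ m = 1 %[mod k].

Lemma cond_c : s * \sum_(0 <= i < m) geosum t r ^ i + 1 = t %[mod #[y] %/ m].
Proof.
have x_expm : x ^+ (r ^ m) = x by rewrite -(expg_mod _ xk) r_expm expg_mod // expg1.
have swap_expE :
    (swap_exp r m s t m 1 = m * (1 + s * \sum_(0 <= u < m) geosum t (r ^ u)))%N.
  by rewrite /swap_exp mulnDr muln1 mulnA; under eq_bigr do rewrite muln1.
have := swap_yX_xX m 1; rewrite muln1 x_expm ymx swap_expE => /mulgI/(expgM_inj_mod m_dvd).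
have sum_mod : \sum_(0 <= u < m) geosum t (r ^ u) = \sum_(0 <= u < m) geosum t r ^ u
    %[mod #[y] %/ m].
  by rewrite -modn_summ (eq_bigr _ (fun u _ => geosumX_mod t_expr_mod u)) modn_summ.
by rewrite addnC => ->; rewrite -modnDml -modnMmr -sum_mod modnMmr modnDml.
Qed.

End Relations.

Lemma mulg_TI_inj (gT : finGroupType) (K H : {group gT}) u v u' v' :
  K :&: H = 1 -> u \in K -> v \in H -> u' \in K -> v' \in H ->
  u * v = u' * v' -> u = u' /\ v = v'.
Proof.
move=> tiKH Ku Hv Ku' Hv' eq_uv; split.
  by rewrite -(divgrMid tiKH Ku Hv) eq_uv divgrMid.
by rewrite -(remgrMid tiKH Ku Hv) eq_uv remgrMid.
Qed.

Section SkewMorphism.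
Variables (gT : finGroupType) (a c : gT) (r m : nat).
Hypotheses (tiAC : <[a]> :&: <[c]> = 1) (co_r : coprime r #[a])
  (ord_r : is_mult_order #[a] r m)
  (skew : forall i, exists j, c * a ^+ i = a ^+ (r * i) * c ^+ j).

Lemma skew_expg u i : exists e, c ^+ u * a ^+ i = a ^+ (r ^ u * i) * c ^+ e.
Proof.
elim: u i => [|u IH] i; first by exists 0; rewrite mul1g mul1n mulg1.
have [j def_j] := skew i; have [e def_e] := IH (r * i)%N.
by exists (e + j)%N; rewrite expgSr -mulgA def_j mulgA def_e -mulgA -expgD expnSr mulnA.
Qed.

Lemma skew_expg_mod u i e :
  c ^+ u * a ^+ i = a ^+ (r ^ u * i) * c ^+ e -> e = u %[mod m].
Proof.
move=> def_e; have [e1 def_e1] := skew_expg e 1; have [e2 def_e2] := skew_expg u i.+1.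
have : a ^+ (r ^ u * i + r ^ e) * c ^+ e1 = a ^+ (r ^ u * i.+1) * c ^+ e2.
  by rewrite -def_e2 expgSr mulgA def_e -mulgA -(expg1 a) def_e1 muln1 mulgA -expgD.
case/(mulg_TI_inj tiAC); rewrite ?mem_cycle // => /eqP + _.
rewrite eq_expg_mod_order mulnS addnC eqn_modDr => /eqP.
exact: mult_order_expn_inj.
Qed.

Lemma skew_relations : m %| #[c] -> exists s t,
  [/\ s < #[c] %/ m, t < #[c] %/ m, c * a = a ^+ r * c ^+ (1 + m * s)
    & c ^+ m * a = a * c ^+ (m * t)].
Proof.
move=> m_dvd; have [_ [r_expm _]] := ord_r.
have [j def_j] := skew 1; have [e def_e] := skew_expg m 1.
have a_expm : a ^+ (r ^ m) = a by rewrite -expg_mod_order r_expm expg_mod_order.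
have j_mod : j = 1 %[mod m] by apply: (skew_expg_mod (i := 1)).
have e_mod : e = 0 %[mod m] by rewrite (skew_expg_mod def_e) modnn mod0n.
have [s s_lt def_cj] := expg_eq_mod_exists m_dvd j_mod.
have [t t_lt def_ce] := expg_eq_mod_exists m_dvd e_mod.
exists s, t; split=> //; first by rewrite -(expg1 a) def_j def_cj muln1.
by rewrite -(expg1 a) def_e def_ce muln1 a_expm add0n.
Qed.

End SkewMorphism.

Section NormalFormHom.
Variables (gT rT : finGroupType) (G : {group gT}) (a c : gT) (x y : rT) (r m s t : nat).
Hypotheses (tiAC : <[a]> :&: <[c]> = 1) (defG : <[a]> * <[c]> = G)
  (ca : c * a = a ^+ r * c ^+ (1 + m * s)) (cma : c ^+ m * a = a * c ^+ (m * t))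
  (x_ord : x ^+ #[a] = 1) (y_ord : y ^+ #[c] = 1)
  (yx : y * x = x ^+ r * y ^+ (1 + m * s)) (ymx : y ^+ m * x = x * y ^+ (m * t)).

Definition nf_map (g : gT) : rT :=
  if [pick ij : 'I_#[a] * 'I_#[c] | g == a ^+ ij.1 * c ^+ ij.2] is Some ij
  then x ^+ ij.1 * y ^+ ij.2 else 1.

Lemma nf_mapE i j : nf_map (a ^+ i * c ^+ j) = x ^+ i * y ^+ j.
Proof.
rewrite /nf_map; case: pickP => [ij /eqP/esym|].
  case/(mulg_TI_inj tiAC); rewrite ?mem_cycle // => /eqP + /eqP.
  rewrite !eq_expg_mod_order => /eqP a_mod /eqP c_mod.
  by rewrite -(expg_mod _ x_ord) a_mod expg_mod // -(expg_mod _ y_ord) c_mod expg_mod.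
move/(_ (Ordinal (ltn_pmod i (order_gt0 a)), Ordinal (ltn_pmod j (order_gt0 c)))).
by rewrite /= !expg_mod_order eqxx.
Qed.

Lemma nf_mapM : {in G &, {morph nf_map : g h / g * h}}.
Proof.
rewrite -defG => g h /mulsgP[_ _ /cycleP[i ->] /cycleP[j ->] ->].
move=> /mulsgP[_ _ /cycleP[u ->] /cycleP[v ->] ->].
rewrite mulgA -(mulgA _ (c ^+ j)) (swap_yX_xX ca cma) !mulgA -expgD -mulgA -expgD !nf_mapE.
by rewrite expgD -!mulgA (mulgA (y ^+ j)) (swap_yX_xX yx ymx) -!mulgA -expgD.
Qed.

Lemma homg_of_relations (H : {group rT}) : <[x]> <*> <[y]> = H -> H \homg G.
Proof.
move=> defH; apply/homgP; exists (Morphism nf_mapM).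
apply/eqP; rewrite eqEsubset; apply/andP; split.
  apply/subsetP => _ /morphimP[g _ Gg ->] /=.
  move: Gg; rewrite -defG => /mulsgP[_ _ /cycleP[i ->] /cycleP[j ->] ->].
  by rewrite nf_mapE -defH groupM // groupX // mem_gen // inE cycle_id ?orbT.
rewrite -defH join_subG !cycle_subG; apply/andP; split.
  rewrite -[x]mulg1 -(expg1 x) -(expg0 y) -nf_mapE.
  by apply: mem_morphim; rewrite //= -defG mem_mulg ?mem_cycle.
rewrite -[y]mul1g -(expg1 y) -(expg0 x) -nf_mapE.
by apply: mem_morphim; rewrite //= -defG mem_mulg ?mem_cycle.
Qed.

End NormalFormHom.

Theorem theorem1p2 (gT : finGroupType) (G : {group gT}) (a c : gT)
    (k r m n : nat) :
  (1 <= r < k)%N -> coprime r k ->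
  is_mult_order k r m ->
  (0 < n)%N -> (m %| n)%N ->
  #[a] = k -> #[c] = n ->
  <[a]> :&: <[c]> = 1 ->
  <[a]> * <[c]> = G ->
  (* the skew-morphism of <[a]> determined by c is phi : a^i |-> a^(r i) *)
  (forall i : nat, exists j : nat, c * a ^+ i = a ^+ (r * i) * c ^+ j) ->
  exists s t : nat,
    [/\ (s < n %/ m)%N, (t < n %/ m)%N,
        t ^ r.-1 = 1 %[mod n %/ m],
        (s * \sum_(1 <= i < k.+1) t ^ i.-1 = 0 %[mod n %/ m])%N &
        (s * \sum_(1 <= i < m.+1) (\sum_(1 <= j < r.+1) t ^ j.-1) ^ i.-1
           + 1 = t %[mod n %/ m])%N] /\
        [/\ a ^+ k = 1, c ^+ n = 1, c ^+ m * a = a * c ^+ (m * t)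
          & c * a = a ^+ r * c ^+ (1 + m * s)] /\
        G \isog Grp (x : y : (x ^+ k, y ^+ n,
                              y ^+ m * x = x * y ^+ (m * t),
                              y * x = x ^+ r * y ^+ (1 + m * s))).
Proof.
move=> /andP[r_gt0 _] co_rk ord_r _ m_dvd ord_a ord_c tiAC defG skew; subst k n.
have [s [t [s_lt t_lt ca cma]]] := skew_relations tiAC co_rk ord_r skew m_dvd.
have a_ord := expg_order a; have c_ord := expg_order c.
have [_ [r_expm _]] := ord_r.
exists s, t; split; last split => //.
  rewrite !big_add1 /=; split => //.
  - exact: (cond_a (x := a) ca cma a_ord m_dvd (order_gt0 a) r_gt0).
  - exact: (cond_b (x := a) ca cma a_ord m_dvd).
  exact: (cond_c (x := a) ca cma a_ord m_dvd r_expm).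
apply: intro_isoGrp.
  apply/existsP; exists (a, c); rewrite /= !xpair_eqE a_ord c_ord cma ca !eqxx !andbT.
  by rewrite comm_joingE ?defG //; apply/comm_group_setP; rewrite defG; apply: groupP.
move=> rT H /existsP[[x y]] /=; rewrite !xpair_eqE.
case/and5P=> /eqP defH /eqP x_ord /eqP y_ord /eqP ymx /eqP yx.
exact: (homg_of_relations (x := x) tiAC defG ca cma x_ord y_ord yx ymx defH).
Qed.
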